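(* Let $G$ be a graph on $[n]$ which is a noncrossing bond of itself (i.e. the partition of $[n]$ into the vertex sets of the connected components of $G$ is noncrossing). Then $NC_G$ is graded if and only if for every cover relation $H\lessdot H'$ in $NC_G$, the partition $\pi(H')$ is obtained from $\pi(H)$ by merging exactly two blocks. Moreover, when $NC_G$ is graded, its rank function is $\rho(H)=n-cc(H)$, where $cc(H)$ is the number of connected components of $H$.
   Context: All graphs are finite simple graphs with vertex set $[n]=\{1,\dots,n\}$; edges are written $ij$ with $i<j$. A spanning subgraph is identified with its edge set. A bond of $G$ is a spanning subgraph each of whose connected components is an induced subgraph of $G$. For a bond $H$, $\pi(H)$ is the set partition of $[n]$ whose blocks are the vertex sets of the connected components of $H$. A set partition is crossing if there are distinct blocks $B,B'$ and $a,c\in B$, $b,d\in B'$ with $a<b<c<d$, and noncrossing otherwise; a bond $H$ is noncrossing if $\pi(H)$ is. $NC_G$ is the poset of noncrossing bonds of $G$ ordered by inclusion of edge sets. *)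

From mathcomp Require Import all_boot.
Set Implicit Arguments. Unset Strict Implicit. Unset Printing Implicit Defensive.

(* Vertices are 'I_n (standing for [n] = {1..n}, shifted by one; order preserved).
   A graph / spanning subgraph is its edge set: a set of pairs (i,j) with i<j. *)
Definition edgeset (n : nat) := {set ('I_n * 'I_n)}.

Definition simple_graph n (G : edgeset n) : Prop :=
  forall e, e \in G -> (e.1 < e.2)%N.

Definition adj n (H : edgeset n) : rel 'I_n :=
  fun x y => ((x, y) \in H) || ((y, x) \in H).

Definition comp n (H : edgeset n) (x : 'I_n) : {set 'I_n} :=
  [set y | connect (adj H) x y].

Definition bpart n (H : edgeset n) : {set {set 'I_n}} :=
  [set comp H x | x in 'I_n].

Definition cc n (H : edgeset n) : nat := #|bpart H|.

(* H is a bond of G: spanning subgraph of G whose components are induced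
   subgraphs of G *)
Definition is_bond n (G H : edgeset n) : Prop :=
  H \subset G /\
  forall e, e \in G -> comp H e.1 = comp H e.2 -> e \in H.

Definition crossing n (P : {set {set 'I_n}}) : Prop :=
  exists B B' a b c d, [/\ B \in P, B' \in P, B != B',
    [/\ a \in B, c \in B, b \in B' & d \in B'] &
    [/\ (a < b)%N, (b < c)%N & (c < d)%N]].

Definition noncrossing n (P : {set {set 'I_n}}) : Prop := ~ crossing P.

Definition inNC n (G H : edgeset n) : Prop := is_bond G H /\ noncrossing (bpart H).

Definition covers n (G H H' : edgeset n) : Prop :=
  [/\ inNC G H, inNC G H', H \proper H' &
      forall K, inNC G K -> H \proper K -> K \proper H' -> False].

Definition is_rank_function n (G : edgeset n) (rho : edgeset n -> nat) : Prop :=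
  (forall H, inNC G H -> (forall K, inNC G K -> ~ (K \proper H)) -> rho H = 0)
  /\ (forall H H', covers G H H' -> rho H' = (rho H).+1).

Definition graded n (G : edgeset n) : Prop := exists rho, is_rank_function G rho.

Definition merges_two_blocks n (P P' : {set {set 'I_n}}) : Prop :=
  exists B1 B2, [/\ B1 \in P, B2 \in P, B1 != B2 &
    P' = (P :\: [set B1; B2]) :|: [set B1 :|: B2]].

(* Along a proper inclusion of bonds the number of components strictly drops,
   because a bond is determined by its partition.  Every nonempty H in NC_G has
   a lower cover with exactly one more component: delete the edges at a vertex v
   of a nontrivial component that is not a cut vertex (a vertex at maximal
   distance from another one).  This splits off the block {v}, which cannot
   create a crossing.  Descending from H to the bottom element (the empty bond)
   along such covers shows that every rank function is n - cc.  Conversely,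
   n - cc is a rank function when every cover merges two blocks; and when NC_G
   is graded, a cover H <. H' loses exactly one component, so joining the two
   H-blocks of an edge of H' \ H yields a partition that pi(H') coarsens with
   the same number of blocks, i.e. pi(H') itself. *)

From mathcomp Require Import all_boot zify.
(* Imported last, so that [comp] is [Defs.comp] and not [ssrfun.comp]. *)
From Pilot Require Import Defs.
Set Implicit Arguments. Unset Strict Implicit. Unset Printing Implicit Defensive.

Section ClassMaps.
Variable T : finType.
Implicit Types f g h : T -> {set T}.

Definition class_map f := forall x y, (y \in f x) = (f y == f x).

Lemma class_map_refl f x : class_map f -> x \in f x.
Proof. by move=> fP; rewrite fP. Qed.

Lemma class_map_eq f x y : class_map f -> y \in f x -> f y = f x.
Proof. by move=> fP; rewrite fP => /eqP. Qed.

Section Coarsening.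
Variables f g : T -> {set T}.
Hypotheses (fP : class_map f) (gP : class_map g) (sub_gf : forall x, g x \subset f x).

Let join (S : {set T}) := \bigcup_(y in S) f y.

Let join_class x : join (g x) = f x.
Proof.
apply/setP => z; apply/bigcupP/idP => [[y /(subsetP (sub_gf x)) yfx zfy]|zfx].
  by rewrite -(class_map_eq fP yfx).
by exists x => //; exact: class_map_refl.
Qed.

Let classes_join : f @: T = join @: (g @: T).
Proof. by rewrite -imset_comp; apply: eq_imset => x /=; rewrite join_class. Qed.

Lemma leq_card_coarsen : #|f @: T| <= #|g @: T|.
Proof. by rewrite classes_join leq_imset_card. Qed.

Lemma eq_card_coarsen : #|f @: T| = #|g @: T| -> f =1 g.
Proof.
move=> eq_card x; apply/eqP; rewrite eqEsubset sub_gf andbT.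
have /imset_injP join_inj : #|join @: (g @: T)| == #|g @: T|.
  by rewrite -classes_join eq_card.
apply/subsetP => y yfx.
have <- : g y = g x.
  by apply: join_inj; rewrite ?imset_f // !join_class (class_map_eq fP yfx).
exact: class_map_refl.
Qed.

End Coarsening.

Definition merge_class f x y z :=
  if (f z == f x) || (f z == f y) then f x :|: f y else f z.

Section Merge.
Variables (f : T -> {set T}) (x y : T).
Hypothesis fP : class_map f.

Let merged z := (f z == f x) || (f z == f y).

Let mem_merged z : (z \in f x :|: f y) = merged z.
Proof. by rewrite in_setU !fP. Qed.

Lemma class_map_merge : class_map (merge_class f x y).
Proof.
move=> z w; rewrite /merge_class -/(merged z) -/(merged w) -!mem_merged.
have [wm|wm] := boolP (w \in f x :|: f y); case: ifP => [zm|zm].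
- by rewrite wm eqxx.
- have -> : (f x :|: f y == f z) = false.
    by apply: contraFF zm => /eqP ->; apply: class_map_refl.
  rewrite fP; apply: contraFF zm => /eqP ezw.
  by rewrite mem_merged /merged -ezw -/(merged w) -mem_merged.
- rewrite (negbTE wm); apply/esym; apply: contraNF wm => /eqP <-.
  exact: class_map_refl.
- exact: fP.
Qed.

Lemma imset_merge_class :
  merge_class f x y @: T = (f @: T :\: [set f x; f y]) :|: [set f x :|: f y].
Proof.
apply/setP => S; rewrite in_setU in_set1 in_setD in_set2; apply/imsetP/idP.
  case=> z _ ->; rewrite /merge_class; case: ifP => [_|zm]; first by rewrite eqxx orbT.
  by rewrite zm imset_f.
case/orP => [/andP [S_new /imsetP [z _ eS]]|/eqP ->].
  by exists z => //; rewrite /merge_class -eS (negbTE S_new).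
by exists x => //; rewrite /merge_class eqxx.
Qed.

Lemma card_merge_class : f x != f y ->
  #|(f @: T :\: [set f x; f y]) :|: [set f x :|: f y]|.+1 = #|f @: T|.
Proof.
move=> fxy; set P := f @: T.
have sub2 : [set f x; f y] \subset P by rewrite subUset !sub1set !imset_f.
have card2 : 2 <= #|P| by move: (subset_leq_card sub2); rewrite cards2 fxy.
have fresh : f x :|: f y \notin P :\: [set f x; f y].
  apply/negP; rewrite in_setD => /andP [old /imsetP [z _ fz]].
  have x_fz : x \in f z by rewrite -fz in_setU (class_map_refl x fP).
  by move: old; rewrite fz -(class_map_eq fP x_fz) in_set2 eqxx.
rewrite setUC cardsU1 fresh cardsD (setIidPr sub2) cards2 fxy; lia.
Qed.

Lemma merge_class_sub h : class_map h -> (forall z, f z \subset h z) ->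
  y \in h x -> forall z, merge_class f x y z \subset h z.
Proof.
move=> hP sub_fh yx z; rewrite /merge_class; case: ifP => [zm|_]; last exact: sub_fh.
have hyx : h y = h x := class_map_eq hP yx.
have -> : h z = h x.
  have zfz := class_map_refl z fP.
  case/orP: zm => /eqP fz; rewrite fz in zfz; last rewrite -hyx;
    exact: class_map_eq hP (subsetP (sub_fh _) z zfz).
by rewrite subUset sub_fh -hyx sub_fh.
Qed.

End Merge.
End ClassMaps.

Section CutVertices.
Variables (T : finType) (e : rel T).

Definition avoid v : rel T := [rel x y | [&& e x y, x != v & y != v]].

Definition noncut v :=
  forall x y, x != v -> y != v -> connect e x y -> connect (avoid v) x y.

Lemma connect_avoid v x y : ~~ connect e x v -> connect e x y -> connect (avoid v) x y.
Proof.
move=> xv /connectP [p ep ->]; apply/connectP; exists p => //.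
have sub_e : {in [pred w | w != v] &, subrel e (avoid v)}.
  by move=> a b av bv eab; rewrite !inE in av bv; rewrite /avoid /= eab av bv.
have path_v : all [pred w | w != v] (x :: p).
  by apply/allP => w /(path_connect ep) xw; apply: contraNneq xv => <-.
exact: sub_in_path sub_e _ _ path_v ep.
Qed.

Section Balls.
Variable r : T.

Fixpoint ball k : {set T} :=
  if k is k.+1 then ball k :|: [set y | [exists x in ball k, e x y]] else [set r].

Lemma ballS k y : (y \in ball k.+1) = (y \in ball k) || [exists x in ball k, e x y].
Proof. by rewrite /= in_setU inE. Qed.

Lemma ball_mono : {homo ball : j k / j <= k >-> j \subset k}.
Proof.
apply: homo_leq => [A|A B C|k]; [exact: subxx | exact: subset_trans | exact: subsetUl].
Qed.

Lemma ball_path p : path e r p -> last r p \in ball (size p).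
Proof.
elim/last_ind: p => [|p y IH]; first by rewrite /= inE.
rewrite rcons_path last_rcons size_rcons ballS => /andP [/IH rp ey].
by apply/orP; right; apply/existsP; exists (last r p); rewrite rp.
Qed.

Lemma connect_ball y : connect e r y -> y \in ball #|T|.
Proof.
case/connectP => p /shortenP [q eq uq _ ->].
have size_q : size (r :: q) <= #|T| by rewrite -(card_uniqP uq) max_card.
exact: subsetP (ball_mono (ltnW size_q)) _ (ball_path eq).
Qed.

Lemma ball_avoid k v y : v \notin ball k -> y \in ball k.+1 -> y != v ->
  connect (avoid v) r y.
Proof.
elim: k y => [|k IH] y vk.
  rewrite ballS inE => /orP [/eqP -> _|/existsP [x /andP [/set1P -> ery]] yv].
    exact: connect0.
  apply: connect1; rewrite /avoid /= ery yv andbT.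
  by apply: contraNneq vk => <-; apply: set11.
have vk' : v \notin ball k by apply: contraNN vk; apply/subsetP/ball_mono.
rewrite ballS => /orP [/IH-/(_ vk') // | /existsP [x /andP [xk exy]] yv].
have xv : x != v by apply: contraNneq vk => <-.
by apply: connect_trans (IH x vk' xk xv) (connect1 _); rewrite /avoid /= exy xv yv.
Qed.

Lemma exists_noncut_from y0 : connect e r y0 -> y0 != r ->
  exists v, [/\ connect e r v, v != r &
    forall y, connect e r y -> y != v -> connect (avoid v) r y].
Proof.
move=> ry0 y0r; pose B := [set y | connect e r y].
have B_ball : exists k, B \subset ball k.
  by exists #|T|; apply/subsetP => y; rewrite inE; apply: connect_ball.
case: (ex_minnP B_ball) => [[|k] Bk min_k].
  by move/subsetP/(_ y0): Bk; rewrite !inE ry0 (negbTE y0r) => /(_ isT).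
(* v is at maximal distance k.+1 from r *)
have /subsetPn [v Bv vk] : ~~ (B \subset ball k).
  by apply: contraTN (ltnSn k) => /min_k; rewrite leqNgt.
exists v; split; first by rewrite inE in Bv.
  by apply: contraNneq vk => ->; apply: (subsetP (ball_mono (leq0n k))); rewrite inE.
by move=> y ry yv; apply: ball_avoid vk _ yv; apply: (subsetP Bk); rewrite inE.
Qed.

End Balls.

Lemma exists_noncut r y0 : symmetric e -> connect e r y0 -> y0 != r ->
  exists v, [/\ connect e r v, v != r & noncut v].
Proof.
move=> e_sym ry0 y0r; have [v [rv vr r_avoid]] := exists_noncut_from ry0 y0r.
exists v; split=> // x y xv yv xy.
have [xv'|] := boolP (connect e x v); last by move/connect_avoid; apply.
have avoid_sym : connect_sym (avoid v).
  by apply: sym_connect_sym => a b; rewrite /avoid /= e_sym [(a != v) && _]andbC.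
have rx : connect e r x by rewrite (connect_trans rv) // (sym_connect_sym e_sym).
have ry : connect e r y := connect_trans rx xy.
by rewrite (connect_trans _ (r_avoid y ry yv)) // avoid_sym (r_avoid x rx xv).
Qed.

End CutVertices.

Section Components.
Variable n : nat.
Implicit Types (G H K L : edgeset n) (x y : 'I_n) (f : 'I_n * 'I_n).

Lemma adj_sym H : symmetric (adj H).
Proof. by move=> x y; rewrite /adj orbC. Qed.

Lemma comp_class_map H : class_map (comp H).
Proof.
have csym := sym_connect_sym (adj_sym H).
move=> x y; apply/idP/eqP => [|<-]; last by rewrite inE connect0.
rewrite inE => xy.
apply/setP => z; rewrite !inE; apply/idP/idP => yz; first exact: connect_trans xy yz.
by rewrite csym in xy; apply: connect_trans xy yz.
Qed.

Lemma adj_edge H f : f \in H -> adj H f.1 f.2.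
Proof. by move=> fH; rewrite /adj -surjective_pairing fH. Qed.

Lemma edge_comp H f : f \in H -> f.2 \in comp H f.1.
Proof. by move=> fH; rewrite inE connect1 ?adj_edge. Qed.

Lemma comp_mono H K x : K \subset H -> comp K x \subset comp H x.
Proof.
move=> KH; apply/subsetP => y; rewrite !inE; apply: connect_sub => a b.
by rewrite /adj => /orP [] ab; apply: connect1; apply/orP; [left|right]; apply: (subsetP KH).
Qed.

Lemma cc_le H : cc H <= n.
Proof. by rewrite /cc /bpart (leq_trans (leq_imset_card _ _)) // card_ord. Qed.

Lemma comp_set0 x : comp set0 x = [set x].
Proof.
apply/setP => y; rewrite !inE; apply/idP/eqP => [|<-]; last exact: connect0.
by case/connectP => [[_ ->|z p /andP [xz _] _]] //; rewrite /adj !inE in xz.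
Qed.

Lemma cc_set0 : cc (set0 : edgeset n) = n.
Proof.
rewrite /cc /bpart card_imset ?card_ord // => x y.
by rewrite !comp_set0 => /setP /(_ y); rewrite !inE eqxx => /eqP.
Qed.

Lemma inNC_set0 G : simple_graph G -> inNC G set0.
Proof.
move=> sG; split; first split.
- exact: sub0set.
- move=> f fG; rewrite !comp_set0 => /set1_inj f12.
  by have := sG f fG; rewrite f12 ltnn.
- case=> B [B' [a [b [c [d [/imsetP [x _ ->] _ _ [ax cx _ _] [ab bc _]]]]]]].
  by move: (ltn_trans ab bc); rewrite comp_set0 in ax cx; rewrite (set1P ax) (set1P cx) ltnn.
Qed.

Lemma cc_proper G K L : is_bond G K -> is_bond G L -> K \proper L -> cc L < cc K.
Proof.
move=> [_ K_bond] [LG _] /properP [KL [f fL fK]].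
have KL_comp x := comp_mono x KL.
have := leq_card_coarsen (comp_class_map L) (comp_class_map K) KL_comp.
rewrite leq_eqVlt => /orP [/eqP eq_cc|//]; case/negP: fK.
have eq_comp := eq_card_coarsen (comp_class_map L) (comp_class_map K) KL_comp eq_cc.
apply: K_bond; first exact: (subsetP LG).
rewrite -!eq_comp; apply/esym/(class_map_eq (comp_class_map L)).
exact: edge_comp.
Qed.

End Components.

Section Isolate.
Variables (n : nat) (H : edgeset n) (v : 'I_n).

Definition isolate : edgeset n := [set f in H | (f.1 != v) && (f.2 != v)].

Lemma isolate_sub : isolate \subset H.
Proof. by apply/subsetP => f; rewrite inE => /andP []. Qed.

Lemma adj_isolate : adj isolate =2 avoid (adj H) v.
Proof.
move=> x y; rewrite /adj /avoid /= !inE /=.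
by case: (x != v); case: (y != v); rewrite ?andbF ?andbT.
Qed.

Lemma comp_isolate_self : comp isolate v = [set v].
Proof.
apply/setP => y; rewrite !inE; apply/idP/eqP => [|<-]; last exact: connect0.
case/connectP => [[_ ->|z p /andP [vz _] _]] //.
by rewrite adj_isolate /avoid /= eqxx andbF in vz.
Qed.

Hypothesis v_noncut : noncut (adj H) v.

Lemma comp_isolate z : z != v -> comp isolate z = comp H z :\ v.
Proof.
move=> zv; apply/setP => y; rewrite in_setD1.
have [->|yv] /= := eqVneq y v.
  rewrite (comp_class_map isolate) comp_isolate_self; apply/negbTE.
  by apply: contra zv => /eqP vz; rewrite -in_set1 vz (class_map_refl z (comp_class_map _)).
apply/idP/idP => [|yz]; first exact: (subsetP (comp_mono z isolate_sub)).
by rewrite inE (eq_connect adj_isolate); apply: v_noncut zv yv _; rewrite inE in yz.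
Qed.

Lemma comp_merge_isolate u : u \in comp H v -> u != v ->
  comp H =1 merge_class (comp isolate) v u.
Proof.
move=> u_vcomp uv z; have compH := comp_class_map H.
have isolate_u : comp isolate u = comp H v :\ v.
  by rewrite comp_isolate // (class_map_eq compH u_vcomp).
have v_vcomp : v \in comp H v := class_map_refl v compH.
have merged : (comp isolate z == comp isolate v) || (comp isolate z == comp isolate u)
              = (z \in comp H v).
  rewrite -!(comp_class_map isolate) comp_isolate_self isolate_u in_set1 in_setD1.
  by case: eqVneq => [->|].
rewrite /merge_class merged; case: ifP => [z_vcomp|z_vcomp].
  by rewrite comp_isolate_self isolate_u setD1K // (class_map_eq compH z_vcomp).
have zv : z != v by apply: contraFneq z_vcomp => ->.
rewrite comp_isolate //; apply/setP => y; rewrite in_setD1.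
case: eqVneq => [->|//] /=.
by rewrite compH eq_sym -compH z_vcomp.
Qed.

Lemma cc_isolate u : u \in comp H v -> u != v -> cc isolate = (cc H).+1.
Proof.
move=> u_vcomp uv.
have -> : cc H = #|merge_class (comp isolate) v u @: 'I_n|.
  by rewrite /cc /bpart (eq_imset _ (comp_merge_isolate u_vcomp uv)).
rewrite imset_merge_class card_merge_class //; first exact: comp_class_map.
rewrite comp_isolate_self; apply/eqP => /setP /(_ u).
by rewrite in_set1 (negbTE uv) (class_map_refl u (comp_class_map _)).
Qed.

Lemma noncrossing_isolate : noncrossing (bpart H) -> noncrossing (bpart isolate).
Proof.
move=> ncH [B [B' [a [b [c [d [/imsetP [x _ ->] /imsetP [y _ ->] xy]]]]]]].
move=> [ax cx b_y dy] [ab bc cd].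
have compK := comp_class_map isolate.
rewrite -(class_map_eq compK ax) in xy cx; rewrite -(class_map_eq compK b_y) in xy dy.
apply: ncH; exists (comp H a), (comp H b), a, b, c, d; split; try exact: imset_f.
- (* a and b share a block of H but not of [isolate], so one of them is v,
     whose block in [isolate] is {v} *)
  apply: contraNneq xy => ab_comp.
  have [av|] := eqVneq a v.
    by move: (ltn_trans ab bc); rewrite av comp_isolate_self in cx; rewrite (set1P cx) -av ltnn.
  have [bv|] := eqVneq b v.
    by move: (ltn_trans bc cd); rewrite bv comp_isolate_self in dy; rewrite (set1P dy) -bv ltnn.
  by move=> bv av; rewrite !comp_isolate // ab_comp.
- have sub z := subsetP (comp_mono z isolate_sub).
  by split; rewrite ?(class_map_refl _ (comp_class_map H)) ?sub.
- by [].
Qed.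

End Isolate.

Lemma bond_isolate n (G H : edgeset n) v :
  simple_graph G -> is_bond G H -> is_bond G (isolate H v).
Proof.
move=> sG [HG H_bond]; split; first exact: subset_trans (isolate_sub H v) HG.
move=> f fG Kf; have lt12 := sG f fG; have compK := comp_class_map (isolate H v).
have f2_in : f.2 \in comp (isolate H v) f.1 by rewrite Kf (class_map_refl _ compK).
have f1_in : f.1 \in comp (isolate H v) f.2 by rewrite -Kf (class_map_refl _ compK).
have f1v : f.1 != v.
  apply: contraTneq lt12 => f1v; move: f2_in.
  by rewrite f1v comp_isolate_self => /set1P ->; rewrite ltnn.
have f2v : f.2 != v.
  apply: contraTneq lt12 => f2v; move: f1_in.
  by rewrite f2v comp_isolate_self => /set1P ->; rewrite ltnn.
have fH : f \in H.
  apply: H_bond fG _; apply/esym/(class_map_eq (comp_class_map H)).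
  exact: subsetP (comp_mono _ (isolate_sub H v)) _ f2_in.
by rewrite inE fH f1v f2v.
Qed.

Lemma exists_lower_cover n (G H : edgeset n) : simple_graph G -> inNC G H -> H != set0 ->
  exists2 K, covers G K H & cc K = (cc H).+1.
Proof.
move=> sG H_NC /set0Pn [f fH]; have [[HG H_bond] ncH] := H_NC.
have f21 : f.2 != f.1.
  by apply: contraTneq (sG f (subsetP HG f fH)) => ->; rewrite ltnn.
have [v [f1v vf1 v_noncut]] := exists_noncut (adj_sym H) (connect1 (adj_edge fH)) f21.
have f1_vcomp : f.1 \in comp H v by rewrite inE (sym_connect_sym (adj_sym H)).
have ccK : cc (isolate H v) = (cc H).+1.
  by rewrite (cc_isolate v_noncut f1_vcomp) // eq_sym.
have K_NC : inNC G (isolate H v).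
  by split; [apply: bond_isolate | apply: noncrossing_isolate].
exists (isolate H v) => //; split => //.
  rewrite properEneq isolate_sub andbT; apply/eqP => KH.
  by move: ccK; rewrite KH; lia.
move=> L L_NC KL LH.
by have := cc_proper K_NC.1 L_NC.1 KL; have := cc_proper L_NC.1 H_NC.1 LH; lia.
Qed.

Section Ranks.
Variables (n : nat) (G : edgeset n).
Hypothesis sG : simple_graph G.

Lemma rank_function_eq rho : is_rank_function G rho ->
  forall H, inNC G H -> rho H = n - cc H.
Proof.
case=> rho_min rho_cover H; have [k] := ubnP #|H|.
elim: k H => // k IH H /ltnSE H_le H_NC.
have [->|H0] := eqVneq H set0.
  rewrite cc_set0 subnn; apply: rho_min (inNC_set0 sG) _ => K _ /proper_card.
  by rewrite cards0.
have [K K_cover ccK] := exists_lower_cover sG H_NC H0.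
have [K_NC _ /proper_card KH _] := K_cover.
rewrite (rho_cover _ _ K_cover) (IH K) ?(leq_trans KH) // ccK.
by have := cc_le K; rewrite ccK; lia.
Qed.

Lemma rank_function_of_merges :
  (forall H H', covers G H H' -> merges_two_blocks (bpart H) (bpart H')) ->
  is_rank_function G (fun H => n - cc H).
Proof.
move=> merges; split.
  move=> H _ H_min; have [->|H0] := eqVneq H set0; first by rewrite cc_set0 subnn.
  by case: (H_min _ (inNC_set0 sG)); rewrite proper0.
move=> H H' /merges [_ [_ [/imsetP [x _ ->] /imsetP [y _ ->] xy merged]]].
have := card_merge_class (comp_class_map H) xy.
rewrite -/(bpart H) -merged -/(cc H) -/(cc H').
by have := cc_le H; lia.
Qed.

Lemma merges_of_graded : graded G ->
  forall H H', covers G H H' -> merges_two_blocks (bpart H) (bpart H').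
Proof.
case=> rho rho_rank H H' H_cover; have [H_NC H'_NC HH' _] := H_cover.
have ccH : cc H = (cc H').+1.
  have := rho_rank.2 _ _ H_cover; rewrite !(rank_function_eq rho_rank) //.
  by have := cc_le H; have := cc_le H'; lia.
have [/subsetP H'G _] := H'_NC.1.
have [_ [f fH' fH]] := properP HH'.
have compH := comp_class_map H; have compH' := comp_class_map H'.
have xy : comp H f.1 != comp H f.2.
  by apply: contraNneq fH => /H_NC.1.2; apply; apply: H'G.
have H'_merge : comp H' =1 merge_class (comp H) f.1 f.2.
  apply: (eq_card_coarsen compH' (class_map_merge f.1 f.2 compH)).
    by apply: merge_class_sub => // [w|]; [apply: comp_mono (proper_sub HH') | apply: edge_comp].
  apply/eqP; rewrite -eqSS; apply/eqP.
  by rewrite imset_merge_class card_merge_class // -/(cc H) ccH.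
exists (comp H f.1), (comp H f.2); split; rewrite ?imset_f //.
by rewrite /bpart (eq_imset _ H'_merge) imset_merge_class.
Qed.

End Ranks.

Theorem proposition2p10 (n : nat) (G : edgeset n) :
  simple_graph G -> inNC G G ->
  (graded G <->
   (forall H H', covers G H H' -> merges_two_blocks (bpart H) (bpart H'))) /\
  (graded G ->
   is_rank_function G (fun H => n - cc H) /\
   (forall rho, is_rank_function G rho ->
      forall H, inNC G H -> rho H = n - cc H)).
Proof.
move=> sG _.
have rank_cc := rank_function_of_merges sG.
have merges := merges_of_graded sG.
split.
  split=> [|/rank_cc rank]; first exact: merges.
  by exists (fun H => n - cc H).
by move=> G_graded; split; [apply/rank_cc/merges | apply: rank_function_eq].
Qed.
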